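(* Let $d_2,a_2,h,q>0$, $0<x_2\le L$, and let $\bar w$ be the unique positive solution of $d_2w''-a_2w'+h-qw=0$ on $(0,x_2)$ with $d_2w'(0)-a_2w(0)=0$ and $d_2w'(x_2)-a_2w(x_2)=0$. Then: (i) $0<\bar w_x<\frac{a_2}{d_2}\bar w$ in $(0,x_2)$; (ii) $\bar w$ is strictly increasing with respect to $h$; (iii) $\lim_{h\to0}\bar w=0$ and $\lim_{h\to+\infty}\bar w=+\infty$ uniformly on $[0,x_2]$; (iv) $\bar w$ is strictly decreasing with respect to $q$; (v) $\lim_{q\to0}\bar w=+\infty$ and $\lim_{q\to+\infty}\bar w=0$ uniformly on $[0,x_2]$.
   Context: Monotonicity with respect to a parameter means that, for each fixed $x$ in $(0,x_2)$, $\bar w(x)$ is strictly monotone as a function of that parameter with all other parameters fixed. *)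

From Stdlib Require Import Reals.
From Coquelicot Require Import Coquelicot.
Open Scope R_scope.

(* w is a positive classical solution on [0,x2] of
     d w'' - a w' + h - q w = 0 in (0,x2),
     d w'(0) - a w(0) = 0,  d w'(x2) - a w(x2) = 0.
   w is a function R -> R; only its values on [0,x2] matter.
   w is differentiable at every point of [0,x2] (so w' exists up to the
   boundary), twice differentiable in (0,x2). *)
Definition is_pos_sol (d a h q x2 : R) (w : R -> R) : Prop :=
  (forall x, 0 <= x <= x2 -> ex_derive w x) /\
  (forall x, 0 < x < x2 -> ex_derive (Derive w) x) /\
  (forall x, 0 < x < x2 ->
      d * Derive (Derive w) x - a * Derive w x + h - q * w x = 0) /\
  d * Derive w 0 - a * w 0 = 0 /\
  d * Derive w x2 - a * w x2 = 0 /\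
  (forall x, 0 <= x <= x2 -> 0 < w x).

From Stdlib Require Import Reals Lra Psatz.
From Coquelicot Require Import Coquelicot.
Open Scope R_scope.

(* With r1 > 0 > r2 the roots of d r^2 - a r - q, the positive solution is
   explicit, w = h/q + A e^(r1 x) + B e^(r2 x), and the Robin conditions force
   A > 0 > B; every solution coincides with it on [0,x2] (on the open interval
   by factoring the operator, at the endpoints by one-sided derivatives).
   Hence w' > 0, and the Robin flux d w' - a w, a positive combination of the two
   exponentials minus a constant that vanishes at 0 and x2, is negative inside
   by strict convexity: this is (i).  The flux has derivative q w - h, so w takes
   the value h/q; as w increases and e^(-a x/d) w decreases, this gives
   h/q e^(-a x2/d) < w < h/q e^(a x2/d), whence (iii) and (v).  For (ii) and (iv),
   e^(-a x/d) (w1 - w2) satisfies a minimum principle: its derivative has the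
   sign of the Robin flux of w1 - w2, which vanishes at both ends. *)

Lemma is_derive_continuity_pt (f : R -> R) (x l : R) :
  is_derive f x l -> continuity_pt f x.
Proof.
  intro Hf. apply derivable_continuous_pt. exists l. now apply is_derive_Reals.
Qed.

Lemma MVT_is_derive (f f' : R -> R) (a b : R) : a < b ->
  (forall c, a <= c <= b -> is_derive f c (f' c)) ->
  exists c, a < c < b /\ f b - f a = f' c * (b - a).
Proof.
  intros Hab Hf.
  destruct (MVT_cor2 f f' a b Hab) as [c [Hc Hcab]].
  - intros c Hc. now apply is_derive_Reals, Hf.
  - now exists c.
Qed.

Lemma is_derive_0_const_open (f : R -> R) (a b : R) :
  (forall x, a < x < b -> is_derive f x 0) ->
  forall x y, a < x < b -> a < y < b -> f x = f y.
Proof.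
  intros Hf x y Hx Hy.
  destruct (Rtotal_order x y) as [Hxy | [-> | Hyx]]; [| easy |].
  - apply eq_is_derive; [intros t Ht; apply Hf; lra | easy].
  - symmetry. apply eq_is_derive; [intros t Ht; apply Hf; lra | easy].
Qed.

Lemma is_derive_lt0_locally (f : R -> R) (m l : R) : is_derive f m l -> l < 0 ->
  exists del, 0 < del /\
    forall y, y <> m -> Rabs (y - m) < del -> (f y - f m) * (y - m) < 0.
Proof.
  intros Hf Hl.
  destruct (proj1 (is_derive_Reals f m l) Hf (- l) ltac:(lra)) as [del Hdel].
  exists del. split; [apply cond_pos|]. intros y Hym Hy.
  assert (Hh : y - m <> 0) by lra.
  specialize (Hdel (y - m) Hh Hy). replace (m + (y - m)) with y in Hdel by ring.
  apply Rabs_def2 in Hdel. destruct Hdel as [Hquot _].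
  assert (Hsq : 0 < (y - m) * (y - m)) by nra.
  replace ((f y - f m) * (y - m)) with ((f y - f m) / (y - m) * ((y - m) * (y - m)))
    by (field; lra).
  nra.
Qed.

Lemma is_derive_vanish_right (g : R -> R) (p l del : R) :
  is_derive g p l -> 0 < del -> (forall t, 0 < t < del -> g (p + t) = 0) ->
  g p = 0 /\ l = 0.
Proof.
  intros Hg Hdel Hzero.
  assert (Hsmall : forall e, 0 < e -> exists t, 0 < t < del /\ t < e).
  { intros e He. exists (Rmin del e / 2).
    split; [split|]; apply Rmin_case_strong; intros; lra. }
  assert (Hgp : g p = 0).
  { apply Rabs_eq_0, Rle_antisym; [| apply Rabs_pos]. apply Rnot_lt_le. intro Hpos.
    destruct (is_derive_continuity_pt g p l Hg _ Hpos) as [al [Hal Hcont]].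
    destruct (Hsmall al Hal) as [t [Ht Htal]].
    specialize (Hcont (p + t)). simpl in Hcont. unfold R_dist in Hcont.
    rewrite Hzero, Rminus_0_l, Rabs_Ropp in Hcont by easy.
    assert (Hlt : Rabs (g p) < Rabs (g p)).
    { apply Hcont. split; [split; [easy | lra]|].
      replace (p + t - p) with t by ring. rewrite Rabs_right; lra. }
    lra. }
  split; [easy|].
  apply Rabs_eq_0, Rle_antisym; [| apply Rabs_pos]. apply Rnot_lt_le. intro Hpos.
  destruct (proj1 (is_derive_Reals g p l) Hg _ Hpos) as [al Hal].
  destruct (Hsmall al (cond_pos al)) as [t [Ht Htal]].
  specialize (Hal t ltac:(lra)).
  rewrite Hzero, Hgp, Rabs_right in Hal by lra.
  replace ((0 - 0) / t - l) with (- l) in Hal by (field; lra).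
  rewrite Rabs_Ropp in Hal. lra.
Qed.

Lemma is_derive_agree_right (f g : R -> R) (p df dg del : R) :
  is_derive f p df -> is_derive g p dg -> 0 < del ->
  (forall t, 0 < t < del -> f (p + t) = g (p + t)) ->
  f p = g p /\ df = dg.
Proof.
  intros Hf Hg Hdel Hfg.
  destruct (is_derive_vanish_right (fun x => f x - g x) p (df - dg) del)
    as [Hp Hd]; [now apply @is_derive_minus | easy | |].
  - intros t Ht. rewrite Hfg by easy. ring.
  - split; lra.
Qed.

Lemma is_derive_agree_left (f g : R -> R) (p df dg del : R) :
  is_derive f p df -> is_derive g p dg -> 0 < del ->
  (forall t, 0 < t < del -> f (p - t) = g (p - t)) ->
  f p = g p /\ df = dg.
Proof.
  intros Hf Hg Hdel Hfg.
  assert (Hreflect : forall (u : R -> R) du, is_derive u p du ->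
            is_derive (fun x => u (- x)) (- p) (- du)).
  { intros u du Hu. replace (- du) with (scal (-1) du)
      by (unfold scal; simpl; unfold mult; simpl; ring).
    apply (is_derive_comp u Ropp); [now rewrite Ropp_involutive |].
    auto_derive; [easy | ring]. }
  destruct (is_derive_agree_right (fun x => f (- x)) (fun x => g (- x)) (- p)
              (- df) (- dg) del) as [Hp Hd]; auto.
  - intros t Ht. replace (- (- p + t)) with (p - t) by ring. auto.
  - rewrite Ropp_involutive in Hp. split; lra.
Qed.

Lemma exp_gt_tangent (c z : R) : z <> c -> exp c * (1 + (z - c)) < exp z.
Proof.
  intro Hzc.
  replace (exp z) with (exp c * exp (z - c)) by (rewrite <- exp_plus; f_equal; ring).
  apply Rmult_lt_compat_l; [apply exp_pos | apply exp_ineq1; lra].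
Qed.

Lemma exp_lt_chord (t y : R) : 0 < t < 1 -> y <> 0 ->
  exp (t * y) < 1 - t + t * exp y.
Proof.
  intros Ht Hy.
  assert (H0 := exp_gt_tangent (t * y) 0 ltac:(nra)).
  assert (H1 := exp_gt_tangent (t * y) y ltac:(nra)).
  rewrite exp_0 in H0. nra.
Qed.

Definition expsum (k A B r1 r2 x : R) : R := k + A * exp (r1 * x) + B * exp (r2 * x).

Lemma is_derive_expsum (k A B r1 r2 x : R) :
  is_derive (expsum k A B r1 r2) x (expsum 0 (A * r1) (B * r2) r1 r2 x).
Proof. unfold expsum. auto_derive; [easy | ring]. Qed.

Lemma expsum_lt0_between (c A B r1 r2 x2 x : R) :
  0 < A -> 0 < B -> r1 <> 0 -> r2 <> 0 -> 0 < x < x2 ->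
  expsum c A B r1 r2 0 = 0 -> expsum c A B r1 r2 x2 = 0 ->
  expsum c A B r1 r2 x < 0.
Proof.
  unfold expsum. intros HA HB Hr1 Hr2 Hx H0 Hx2.
  rewrite !Rmult_0_r, exp_0 in H0.
  set (t := x / x2).
  assert (Ht : 0 < t < 1).
  { unfold t. split; [apply Rdiv_lt_0_compat; lra |].
    apply Rmult_lt_reg_r with x2; [lra |]. field_simplify; lra. }
  assert (Hxt : x = t * x2) by (unfold t; field; lra).
  assert (C1 := exp_lt_chord t (r1 * x2) Ht ltac:(nra)).
  assert (C2 := exp_lt_chord t (r2 * x2) Ht ltac:(nra)).
  replace (r1 * x) with (t * (r1 * x2)) by (rewrite Hxt; ring).
  replace (r2 * x) with (t * (r2 * x2)) by (rewrite Hxt; ring).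
  nra.
Qed.

Lemma ode_first_integral (f : R -> R) (k r1 r2 a b : R) :
  (forall x, a < x < b -> ex_derive f x /\ ex_derive (Derive f) x) ->
  (forall x, a < x < b ->
     Derive (Derive f) x - (r1 + r2) * Derive f x + r1 * r2 * (f x - k) = 0) ->
  exists C, forall x, a < x < b -> Derive f x - r2 * (f x - k) = C * exp (r1 * x).
Proof.
  intros Hf Hode.
  set (V := fun x => (Derive f x - r2 * (f x - k)) * exp (- r1 * x)).
  assert (DV : forall x, a < x < b -> is_derive V x 0).
  { intros x Hx. destruct (Hf x Hx) as [Hf1 Hf2]. specialize (Hode x Hx).
    unfold V. auto_derive; [easy |].
    change (Derive (fun y => f y) x) with (Derive f x).
    change (Derive (fun y => Derive f y) x) with (Derive (Derive f) x).
    replace (Derive (Derive f) x)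
      with ((r1 + r2) * Derive f x - r1 * r2 * (f x - k)) by lra.
    ring. }
  exists (V ((a + b) / 2)). intros x Hx.
  rewrite <- (is_derive_0_const_open V a b DV x) by lra.
  unfold V. rewrite Rmult_assoc, <- exp_plus.
  replace (- r1 * x + r1 * x) with 0 by ring. rewrite exp_0. ring.
Qed.

Lemma first_order_solution (f : R -> R) (k r1 r2 a b C : R) : r1 <> r2 ->
  (forall x, a < x < b -> ex_derive f x) ->
  (forall x, a < x < b -> Derive f x - r2 * (f x - k) = C * exp (r1 * x)) ->
  exists B, forall x, a < x < b -> f x = expsum k (C / (r1 - r2)) B r1 r2 x.
Proof.
  intros Hr Hf Hfo.
  set (W := fun x => (f x - k) * exp (- r2 * x) - C / (r1 - r2) * exp ((r1 - r2) * x)).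
  assert (Hsplit : forall x, exp ((r1 - r2) * x) = exp (r1 * x) * exp (- r2 * x))
    by (intro x; rewrite <- exp_plus; f_equal; ring).
  assert (DW : forall x, a < x < b -> is_derive W x 0).
  { intros x Hx. unfold W. auto_derive; [now apply Hf |].
    change (Derive (fun y => f y) x) with (Derive f x).
    replace (Derive f x) with (r2 * (f x - k) + C * exp (r1 * x)) by (rewrite <- Hfo; lra).
    rewrite Hsplit. field. lra. }
  exists (W ((a + b) / 2)). intros x Hx.
  rewrite <- (is_derive_0_const_open W a b DW x) by lra.
  assert (Hinv : exp (- r2 * x) * exp (r2 * x) = 1).
  { rewrite <- exp_plus. replace (- r2 * x + r2 * x) with 0 by ring. apply exp_0. }
  unfold W, expsum. rewrite Hsplit.
  transitivity (k + C / (r1 - r2) * exp (r1 * x)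
                + (f x - k - C / (r1 - r2) * exp (r1 * x)) * (exp (- r2 * x) * exp (r2 * x)));
    [rewrite Hinv; ring | ring].
Qed.

Lemma ode_distinct_roots_solution (f : R -> R) (k r1 r2 a b : R) : r1 <> r2 ->
  (forall x, a < x < b -> ex_derive f x /\ ex_derive (Derive f) x) ->
  (forall x, a < x < b ->
     Derive (Derive f) x - (r1 + r2) * Derive f x + r1 * r2 * (f x - k) = 0) ->
  exists A B, forall x, a < x < b -> f x = expsum k A B r1 r2 x.
Proof.
  intros Hr Hf Hode.
  destruct (ode_first_integral f k r1 r2 a b Hf Hode) as [C HC].
  destruct (first_order_solution f k r1 r2 a b C Hr) as [B HB]; [apply Hf | easy |].
  now exists (C / (r1 - r2)), B.
Qed.

Lemma is_derive_exp_weight (d a : R) (u : R -> R) (x du : R) : d <> 0 ->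
  is_derive u x du ->
  is_derive (fun y => exp (- (a / d) * y) * u y) x
    (exp (- (a / d) * x) / d * (d * du - a * u x)).
Proof.
  intros Hd Hu. auto_derive; [now exists du |].
  replace (Derive (fun y => u y) x) with du by (symmetry; now apply is_derive_unique).
  field. easy.
Qed.

Definition robin_classical_sol (d a h q x2 : R) (u u' u'' : R -> R) : Prop :=
  (forall x, 0 <= x <= x2 ->
     is_derive u x (u' x) /\ is_derive u' x (u'' x) /\
     d * u'' x - a * u' x + h - q * u x = 0) /\
  d * u' 0 - a * u 0 = 0 /\ d * u' x2 - a * u x2 = 0.

Lemma robin_classical_is_pos_sol (d a h q x2 : R) (u u' u'' : R -> R) : 0 <= x2 ->
  robin_classical_sol d a h q x2 u u' u'' -> (forall x, 0 <= x <= x2 -> 0 < u x) ->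
  is_pos_sol d a h q x2 u.
Proof.
  intros Hx2 [Hu [Hbc0 Hbc1]] Hpos.
  assert (Hu' : forall x, 0 <= x <= x2 -> Derive u x = u' x)
    by (intros x Hx; apply is_derive_unique, Hu, Hx).
  assert (Hu'' : forall x, 0 < x < x2 -> is_derive (Derive u) x (u'' x)).
  { intros x Hx. apply (is_derive_ext_loc u'); [| apply Hu; lra].
    apply (locally_interval _ x 0 x2); [simpl; lra | simpl; lra |].
    intros y Hy0 Hy1. symmetry. apply Hu'. simpl in *. lra. }
  repeat split.
  - intros x Hx. exists (u' x). apply Hu, Hx.
  - intros x Hx. exists (u'' x). now apply Hu''.
  - intros x Hx. rewrite (is_derive_unique _ _ _ (Hu'' x Hx)), Hu' by lra. apply Hu. lra.
  - now rewrite Hu' by lra.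
  - now rewrite Hu' by lra.
  - exact Hpos.
Qed.

Definition robin_coef1 (k r1 r2 x2 : R) : R :=
  (r1 + r2) * k * (1 - exp (r2 * x2)) / (- r2 * (exp (r1 * x2) - exp (r2 * x2))).

Definition robin_coef2 (k r1 r2 x2 : R) : R :=
  (r1 + r2) * k * (exp (r1 * x2) - 1) / (- r1 * (exp (r1 * x2) - exp (r2 * x2))).

Lemma expsum_robin_flux (d a k A B r1 r2 x : R) : a = d * (r1 + r2) ->
  d * expsum 0 (A * r1) (B * r2) r1 r2 x - a * expsum k A B r1 r2 x
  = expsum (- d * (r1 + r2) * k) (- d * r2 * A) (- d * r1 * B) r1 r2 x.
Proof. intros ->. unfold expsum. ring. Qed.

Lemma robin_flux_vanish_iff (d k r1 r2 x2 A B : R) :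
  0 < d -> 0 < x2 -> 0 < r1 -> r2 < 0 ->
  (expsum (- d * (r1 + r2) * k) (- d * r2 * A) (- d * r1 * B) r1 r2 0 = 0 /\
   expsum (- d * (r1 + r2) * k) (- d * r2 * A) (- d * r1 * B) r1 r2 x2 = 0) <->
  A = robin_coef1 k r1 r2 x2 /\ B = robin_coef2 k r1 r2 x2.
Proof.
  intros Hd Hx2 Hr1 Hr2. unfold expsum, robin_coef1, robin_coef2.
  rewrite !Rmult_0_r, exp_0.
  assert (He1 : 1 < exp (r1 * x2)) by (rewrite <- exp_0; apply exp_increasing; nra).
  assert (He2 : exp (r2 * x2) < 1) by (rewrite <- exp_0; apply exp_increasing; nra).
  set (e1 := exp (r1 * x2)) in *. set (e2 := exp (r2 * x2)) in *.
  split.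
  - intros [H0 H1].
    assert (L0 : A * r2 + B * r1 = - ((r1 + r2) * k)) by nra.
    assert (L1 : A * r2 * e1 + B * r1 * e2 = - ((r1 + r2) * k)) by nra.
    split.
    + apply (Rmult_eq_reg_r (- r2 * (e1 - e2))); [| nra]. field_simplify; nra.
    + apply (Rmult_eq_reg_r (- r1 * (e1 - e2))); [| nra]. field_simplify; nra.
  - intros [-> ->]. split; field; lra.
Qed.

Section RobinSteadyState.

Variables d a h q r1 r2 x2 : R.
Hypotheses (d_gt0 : 0 < d) (a_gt0 : 0 < a) (h_gt0 : 0 < h) (x2_gt0 : 0 < x2).
Hypotheses (r1_gt0 : 0 < r1) (r2_lt0 : r2 < 0).
Hypotheses (a_roots : a = d * (r1 + r2)) (q_roots : q = - (d * (r1 * r2))).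

Local Notation alpha := (robin_coef1 (h / q) r1 r2 x2).
Local Notation beta := (robin_coef2 (h / q) r1 r2 x2).
Local Notation wbar := (expsum (h / q) alpha beta r1 r2).
Local Notation wbar' := (expsum 0 (alpha * r1) (beta * r2) r1 r2).
Local Notation wbar'' := (expsum 0 (alpha * r1 * r1) (beta * r2 * r2) r1 r2).

Let q_gt0 : 0 < q. Proof. rewrite q_roots. nra. Qed.

Let e1_gt1 : 1 < exp (r1 * x2).
Proof. rewrite <- exp_0. apply exp_increasing. nra. Qed.

Let e2_lt1 : exp (r2 * x2) < 1.
Proof. rewrite <- exp_0. apply exp_increasing. nra. Qed.

Lemma robin_coef1_gt0 : 0 < alpha.
Proof.
  unfold robin_coef1. assert (0 < h / q) by (apply Rdiv_lt_0_compat; lra).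
  assert (0 < r1 + r2) by nra.
  apply Rdiv_lt_0_compat; apply Rmult_lt_0_compat; try apply Rmult_lt_0_compat; lra.
Qed.

Lemma robin_coef2_lt0 : beta < 0.
Proof.
  unfold robin_coef2. assert (0 < h / q) by (apply Rdiv_lt_0_compat; lra).
  assert (0 < r1 + r2) by nra.
  assert (0 < (r1 + r2) * (h / q) * (exp (r1 * x2) - 1))
    by (apply Rmult_lt_0_compat; try apply Rmult_lt_0_compat; lra).
  assert (exp (r2 * x2) < exp (r1 * x2)) by lra.
  apply Rdiv_pos_neg; [easy | nra].
Qed.

Let wbar_flux x : d * wbar' x - a * wbar x =
  expsum (- d * (r1 + r2) * (h / q)) (- d * r2 * alpha) (- d * r1 * beta) r1 r2 x.
Proof. now apply expsum_robin_flux. Qed.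

Lemma wbar_robin_classical : robin_classical_sol d a h q x2 wbar wbar' wbar''.
Proof.
  split; [| rewrite !wbar_flux; now apply robin_flux_vanish_iff].
  intros x _. split; [apply is_derive_expsum |]. split; [apply is_derive_expsum |].
  unfold expsum. rewrite a_roots, q_roots. field. nra.
Qed.

Lemma wbar_deriv_gt0 x : 0 < wbar' x.
Proof.
  assert (Ha := robin_coef1_gt0). assert (Hb := robin_coef2_lt0).
  assert (E1 := exp_pos (r1 * x)). assert (E2 := exp_pos (r2 * x)).
  unfold expsum. set (A := alpha) in *. set (B := beta) in *.
  assert (0 < A * r1 * exp (r1 * x)) by (apply Rmult_lt_0_compat; nra).
  assert (0 < B * r2 * exp (r2 * x)) by (apply Rmult_lt_0_compat; nra).
  lra.
Qed.

Lemma wbar_flux_lt0 x : 0 < x < x2 -> d * wbar' x - a * wbar x < 0.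
Proof.
  intro Hx. assert (Ha := robin_coef1_gt0). assert (Hb := robin_coef2_lt0).
  rewrite wbar_flux. apply (expsum_lt0_between _ _ _ _ _ x2); try lra; try nra.
  - rewrite <- wbar_flux. apply wbar_robin_classical.
  - rewrite <- wbar_flux. apply wbar_robin_classical.
Qed.

Lemma wbar_le x y : x <= y -> wbar x <= wbar y.
Proof.
  intros [Hxy | ->]; [left | lra].
  apply (incr_function _ m_infty p_infty wbar'); try easy.
  - intros t _ _. apply is_derive_expsum.
  - intros t _ _. apply wbar_deriv_gt0.
Qed.

Lemma wbar_mean_value : exists xi, 0 < xi < x2 /\ q * wbar xi = h.
Proof.
  destruct wbar_robin_classical as [Hsol [Hbc0 Hbc1]].
  destruct (MVT_is_derive (fun y => d * wbar' y - a * wbar y)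
              (fun y => d * wbar'' y - a * wbar' y) 0 x2) as [xi [Hxi Hmvt]]; [easy | |].
  - intros c Hc. apply @is_derive_minus; apply @is_derive_scal; apply Hsol, Hc.
  - exists xi. split; [easy |]. destruct (Hsol xi ltac:(lra)) as [_ [_ Hode]].
    rewrite Hbc0, Hbc1 in Hmvt. nra.
Qed.

Lemma wbar_weighted_decrease : exp (- (a / d * x2)) * wbar x2 < wbar 0.
Proof.
  destruct (MVT_is_derive (fun y => exp (- (a / d) * y) * wbar y)
              (fun y => exp (- (a / d) * y) / d * (d * wbar' y - a * wbar y)) 0 x2)
    as [c [Hc Hmvt]]; [easy | |].
  - intros c _. apply is_derive_exp_weight; [lra | apply is_derive_expsum].
  - cbv beta in Hmvt. rewrite Rmult_0_r, exp_0, Rmult_1_l in Hmvt.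
    replace (- (a / d) * x2) with (- (a / d * x2)) in Hmvt by ring.
    assert (Hs : 0 < exp (- (a / d) * c) / d)
      by (apply Rdiv_lt_0_compat; [apply exp_pos | easy]).
    assert (Hflux := wbar_flux_lt0 c Hc).
    set (s := exp (- (a / d) * c) / d) in *.
    set (F := d * wbar' c - a * wbar c) in *.
    assert (0 < s * (- F) * (x2 - 0))
      by (apply Rmult_lt_0_compat; [apply Rmult_lt_0_compat |]; lra).
    replace (s * F * (x2 - 0)) with (- (s * (- F) * (x2 - 0))) in Hmvt by ring.
    lra.
Qed.

Lemma wbar_bounds x : 0 <= x <= x2 ->
  h * exp (- (a / d * x2)) < q * wbar x < h * exp (a / d * x2).
Proof.
  intro Hx. destruct wbar_mean_value as [xi [Hxi Hwxi]].
  assert (Hdecay := wbar_weighted_decrease).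
  assert (Hinv : exp (- (a / d * x2)) * exp (a / d * x2) = 1).
  { rewrite <- exp_plus. replace (- (a / d * x2) + a / d * x2) with 0 by ring. apply exp_0. }
  assert (Em := exp_pos (- (a / d * x2))). assert (Ep := exp_pos (a / d * x2)).
  assert (wbar 0 <= wbar x <= wbar x2) by (split; apply wbar_le; lra).
  assert (wbar 0 <= wbar xi <= wbar x2) by (split; apply wbar_le; lra).
  set (em := exp (- (a / d * x2))) in *. set (ep := exp (a / d * x2)) in *.
  set (w0 := wbar 0) in *. set (w1 := wbar x2) in *.
  set (wx := wbar x) in *. set (wxi := wbar xi) in *.
  split.
  - assert (0 <= q * (wx - w0)) by nra.
    assert (0 < q * (w0 - em * w1)) by nra.
    assert (0 <= q * em * (w1 - wxi)) by (apply Rmult_le_pos; nra).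
    nra.
  - assert (0 <= q * (w1 - wx)) by nra.
    assert (0 < q * ep * (w0 - em * w1)) by (apply Rmult_lt_0_compat; nra).
    assert (0 <= q * ep * (wxi - w0)) by (apply Rmult_le_pos; nra).
    nra.
Qed.

Lemma pos_sol_eq_wbar (w : R -> R) : is_pos_sol d a h q x2 w ->
  forall x, 0 <= x <= x2 -> w x = wbar x /\ Derive w x = wbar' x.
Proof.
  intros [Hd1 [Hd2 [Hode [Hbc0 [Hbc1 _]]]]].
  destruct (ode_distinct_roots_solution w (h / q) r1 r2 0 x2) as [A [B Hw]].
  - lra.
  - intros x Hx. split; [apply Hd1; lra | now apply Hd2].
  - intros x Hx. apply (Rmult_eq_reg_l d); [| lra].
    rewrite Rmult_0_r, <- (Hode x Hx), a_roots, q_roots. field. nra.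
  - assert (Hext : forall p, 0 <= p <= x2 ->
              w p = expsum (h / q) A B r1 r2 p /\
              Derive w p = expsum 0 (A * r1) (B * r2) r1 r2 p).
    { intros p Hp.
      assert (Hwp : is_derive w p (Derive w p)) by now apply Derive_correct, Hd1.
      destruct (Rlt_le_dec p x2) as [Hpx2 | Hpx2].
      - apply (is_derive_agree_right _ _ _ _ _ (x2 - p) Hwp (is_derive_expsum _ _ _ _ _ _));
          [lra |]. intros t Ht. apply Hw. lra.
      - apply (is_derive_agree_left _ _ _ _ _ x2 Hwp (is_derive_expsum _ _ _ _ _ _));
          [lra |]. intros t Ht. apply Hw. lra. }
    assert (HAB : A = alpha /\ B = beta).
    { apply (robin_flux_vanish_iff d); try lra.
      destruct (Hext 0 ltac:(lra)) as [W0 D0]. destruct (Hext x2 ltac:(lra)) as [W1 D1].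
      rewrite W0, D0, expsum_robin_flux in Hbc0 by easy.
      rewrite W1, D1, expsum_robin_flux in Hbc1 by easy.
      now split. }
    destruct HAB as [-> ->]. exact Hext.
Qed.

End RobinSteadyState.

Lemma vieta_roots (d a q : R) : 0 < d -> 0 < a -> 0 < q ->
  exists r1 r2, 0 < r1 /\ r2 < 0 /\ a = d * (r1 + r2) /\ q = - (d * (r1 * r2)).
Proof.
  intros Hd Ha Hq.
  assert (Hdisc : 0 <= a * a + 4 * d * q) by nra.
  assert (Hs2 := sqrt_sqrt _ Hdisc). assert (Hs0 := sqrt_pos (a * a + 4 * d * q)).
  set (s := sqrt (a * a + 4 * d * q)) in *.
  assert (Has : a < s) by nra.
  exists ((a + s) / (2 * d)), ((a - s) / (2 * d)). repeat split.
  - apply Rdiv_lt_0_compat; lra.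
  - apply Rdiv_neg_pos; lra.
  - field. lra.
  - apply (Rmult_eq_reg_l (4 * d)); [| lra].
    field_simplify; [| lra]. nra.
Qed.

Lemma robin_steady_state (d a h q x2 : R) :
  0 < d -> 0 < a -> 0 < h -> 0 < q -> 0 < x2 ->
  exists u u' u'' : R -> R,
    robin_classical_sol d a h q x2 u u' u'' /\
    (forall x, 0 <= x <= x2 -> 0 < u x) /\
    (forall x, 0 < x < x2 -> 0 < u' x /\ d * u' x - a * u x < 0) /\
    (forall x, 0 <= x <= x2 -> h * exp (- (a / d * x2)) < q * u x < h * exp (a / d * x2)) /\
    (forall w, is_pos_sol d a h q x2 w ->
       forall x, 0 <= x <= x2 -> w x = u x /\ Derive w x = u' x).
Proof.
  intros Hd Ha Hh Hq Hx2.
  destruct (vieta_roots d a q Hd Ha Hq) as [r1 [r2 [Hr1 [Hr2 [Har Hqr]]]]].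
  assert (Hbounds := wbar_bounds d a h q r1 r2 x2 Hd Ha Hh Hx2 Hr1 Hr2 Har Hqr).
  do 3 eexists. split; [| split; [| split; [| split]]].
  - apply (wbar_robin_classical d a h q r1 r2 x2); assumption.
  - intros x Hx. destruct (Hbounds x Hx) as [Hlow _].
    assert (0 < h * exp (- (a / d * x2))) by (apply Rmult_lt_0_compat; [easy | apply exp_pos]).
    nra.
  - intros x Hx. split.
    + apply (wbar_deriv_gt0 d a h q r1 r2 x2); assumption.
    + apply (wbar_flux_lt0 d a h q r1 r2 x2); assumption.
  - exact Hbounds.
  - apply (pos_sol_eq_wbar d a h q r1 r2 x2); assumption.
Qed.

Lemma weighted_min_principle (Z G s G' : R -> R) (x2 : R) : 0 < x2 ->
  (forall x, 0 <= x <= x2 -> is_derive Z x (s x * G x) /\ 0 < s x) ->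
  (forall x, 0 <= x <= x2 -> is_derive G x (G' x)) ->
  G 0 = 0 -> G x2 = 0 ->
  (forall x, 0 <= x <= x2 -> Z x <= 0 -> G' x < 0) ->
  forall x, 0 <= x <= x2 -> 0 < Z x.
Proof.
  intros Hx2 HZ HG HG0 HG1 Hneg.
  destruct (continuity_ab_min Z 0 x2) as [m [Hmin Hm]];
    [lra | intros c Hc; eapply is_derive_continuity_pt, HZ, Hc |].
  intros x Hx. apply Rnot_le_lt. intro Hzx.
  assert (HZm : Z m <= 0) by (specialize (Hmin x Hx); lra).
  destruct (is_derive_lt0_locally G m (G' m) (HG m Hm) (Hneg m Hm HZm))
    as [del [Hdel Hloc]].
  (* G decreases through the minimum m, so Z' = s G is negative just right of m
     if G m <= 0, and positive just left of m if G m >= 0. *)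
  assert (Hright : m < x2 -> G m <= 0 -> False).
  { intros Hmx2 HGm. set (t := Rmin (del / 2) (x2 - m)).
    assert (Ht : 0 < t <= del / 2 /\ t <= x2 - m)
      by (unfold t; repeat split; apply Rmin_case_strong; intros; lra).
    destruct (MVT_is_derive Z (fun y => s y * G y) m (m + t)) as [c [Hc Hmvt]];
      [lra | intros c Hc; apply HZ; lra |].
    assert (HGc := Hloc c ltac:(lra) ltac:(rewrite Rabs_right; lra)).
    assert (Hsc : 0 < s c) by (apply HZ; lra).
    assert (HGc0 : G c < 0) by nra.
    assert (0 < s c * (- G c) * t)
      by (apply Rmult_lt_0_compat; [apply Rmult_lt_0_compat |]; lra).
    replace (m + t - m) with t in Hmvt by ring.
    specialize (Hmin (m + t) ltac:(lra)). lra. }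
  assert (Hleft : 0 < m -> 0 <= G m -> False).
  { intros Hm0 HGm. set (t := Rmin (del / 2) m).
    assert (Ht : 0 < t <= del / 2 /\ t <= m)
      by (unfold t; repeat split; apply Rmin_case_strong; intros; lra).
    destruct (MVT_is_derive Z (fun y => s y * G y) (m - t) m) as [c [Hc Hmvt]];
      [lra | intros c Hc; apply HZ; lra |].
    assert (HGc := Hloc c ltac:(lra) ltac:(rewrite Rabs_left; lra)).
    assert (Hsc : 0 < s c) by (apply HZ; lra).
    assert (HGc0 : 0 < G c) by nra.
    assert (0 < s c * G c * t)
      by (apply Rmult_lt_0_compat; [apply Rmult_lt_0_compat |]; lra).
    replace (m - (m - t)) with t in Hmvt by ring.
    specialize (Hmin (m - t) ltac:(lra)). lra. }
  destruct (Rle_lt_dec (G m) 0) as [HGm | HGm].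
  - destruct (Rlt_le_dec m x2) as [Hmx2 | Hmx2]; [now apply Hright |].
    replace m with x2 in * by lra. apply Hleft; lra.
  - apply Hleft; [| lra]. destruct (Req_dec m 0) as [-> | Hm0]; lra.
Qed.

Lemma robin_comparison (d a x2 ha qa hb qb : R) (u u' u'' v v' v'' : R -> R) :
  0 < d -> 0 < x2 -> 0 <= qa -> hb <= ha -> qa <= qb -> hb < ha \/ qa < qb ->
  robin_classical_sol d a ha qa x2 u u' u'' ->
  robin_classical_sol d a hb qb x2 v v' v'' ->
  (forall x, 0 <= x <= x2 -> 0 < v x) ->
  forall x, 0 <= x <= x2 -> v x < u x.
Proof.
  intros Hd Hx2 Hqa Hh Hq Hstrict [Hu [Hu0 Hu1]] [Hv [Hv0 Hv1]] Hvpos x Hx.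
  assert (Hweight : 0 < exp (- (a / d) * x) * (u x - v x)).
  { apply (weighted_min_principle (fun y => exp (- (a / d) * y) * (u y - v y))
             (fun y => d * (u' y - v' y) - a * (u y - v y))
             (fun y => exp (- (a / d) * y) / d)
             (fun y => d * (u'' y - v'' y) - a * (u' y - v' y)) x2); try easy.
    - intros y Hy. split; [| apply Rdiv_lt_0_compat; [apply exp_pos | easy]].
      apply (is_derive_exp_weight d a (fun y => u y - v y)); [lra |].
      apply @is_derive_minus; [apply Hu | apply Hv]; easy.
    - intros y Hy. apply @is_derive_minus; apply @is_derive_scal;
        apply @is_derive_minus; (apply Hu || apply Hv); easy.
    - lra.
    - lra.
    - intros y Hy Hzy.
      assert (Huv : u y - v y <= 0).
      { assert (Hexp := exp_pos (- (a / d) * y)). nra. }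
      destruct (Hu y Hy) as [_ [_ Hode_u]]. destruct (Hv y Hy) as [_ [_ Hode_v]].
      assert (Hvy := Hvpos y Hy).
      (* by the two equations, G' = qa (u - v) - (qb - qa) v - (ha - hb) *)
      nra. }
  assert (Hexp := exp_pos (- (a / d) * x)). nra.
Qed.

Section SteadyStateProperties.

Variables d2 a2 x2 : R.
Hypotheses (d2_gt0 : 0 < d2) (a2_gt0 : 0 < a2) (x2_gt0 : 0 < x2).

Lemma pos_sol_exists_unique (h q : R) : 0 < h -> 0 < q ->
  (exists w, is_pos_sol d2 a2 h q x2 w) /\
  (forall w1 w2, is_pos_sol d2 a2 h q x2 w1 -> is_pos_sol d2 a2 h q x2 w2 ->
     forall x, 0 <= x <= x2 -> w1 x = w2 x).
Proof.
  intros Hh Hq.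
  destruct (robin_steady_state d2 a2 h q x2) as [u [u' [u'' [Hsol [Hpos [_ [_ Huniq]]]]]]];
    try easy.
  split.
  - exists u. apply (robin_classical_is_pos_sol _ _ _ _ _ u u' u''); [lra | easy | easy].
  - intros w1 w2 H1 H2 x Hx.
    now rewrite (proj1 (Huniq w1 H1 x Hx)), (proj1 (Huniq w2 H2 x Hx)).
Qed.

Lemma pos_sol_derive_bounds (h q : R) (w : R -> R) : 0 < h -> 0 < q ->
  is_pos_sol d2 a2 h q x2 w ->
  forall x, 0 < x < x2 -> 0 < Derive w x < a2 / d2 * w x.
Proof.
  intros Hh Hq Hw x Hx.
  destruct (robin_steady_state d2 a2 h q x2) as [u [u' [u'' [_ [_ [Hflux [_ Huniq]]]]]]];
    try easy.
  destruct (Huniq w Hw x ltac:(lra)) as [-> ->]. destruct (Hflux x Hx) as [Hpos Hneg].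
  split; [easy |].
  apply (Rmult_lt_reg_l d2); [easy |].
  replace (d2 * (a2 / d2 * u x)) with (a2 * u x) by (field; lra). lra.
Qed.

Lemma pos_sol_lt (ha qa hb qb : R) (wa wb : R -> R) :
  0 < hb -> 0 < qa -> hb <= ha -> qa <= qb -> hb < ha \/ qa < qb ->
  is_pos_sol d2 a2 ha qa x2 wa -> is_pos_sol d2 a2 hb qb x2 wb ->
  forall x, 0 <= x <= x2 -> wb x < wa x.
Proof.
  intros Hhb Hqa Hh Hq Hstrict Hwa Hwb x Hx.
  destruct (robin_steady_state d2 a2 ha qa x2) as [ua [ua' [ua'' [Hsola [_ [_ [_ Huniqa]]]]]]];
    try easy; try lra.
  destruct (robin_steady_state d2 a2 hb qb x2) as [ub [ub' [ub'' [Hsolb [Hposb [_ [_ Huniqb]]]]]]];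
    try easy; try lra.
  rewrite (proj1 (Huniqa wa Hwa x Hx)), (proj1 (Huniqb wb Hwb x Hx)).
  apply (robin_comparison d2 a2 x2 ha qa hb qb ua ua' ua'' ub ub' ub''); try easy; lra.
Qed.

Lemma pos_sol_bounds (h q : R) (w : R -> R) : 0 < h -> 0 < q -> is_pos_sol d2 a2 h q x2 w ->
  forall x, 0 <= x <= x2 ->
  h * exp (- (a2 / d2 * x2)) < q * w x < h * exp (a2 / d2 * x2).
Proof.
  intros Hh Hq Hw x Hx.
  destruct (robin_steady_state d2 a2 h q x2) as [u [u' [u'' [_ [_ [_ [Hbnd Huniq]]]]]]];
    try easy.
  rewrite (proj1 (Huniq w Hw x Hx)). now apply Hbnd.
Qed.

Lemma pos_sol_limits_h (q : R) : 0 < q ->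
  (forall eps, 0 < eps -> exists delta, 0 < delta /\
     forall h w, 0 < h < delta -> is_pos_sol d2 a2 h q x2 w ->
       forall x, 0 <= x <= x2 -> Rabs (w x) < eps) /\
  (forall M, exists H, 0 < H /\
     forall h w, H < h -> is_pos_sol d2 a2 h q x2 w ->
       forall x, 0 <= x <= x2 -> M < w x).
Proof.
  intro Hq. assert (Em := exp_pos (- (a2 / d2 * x2))). assert (Ep := exp_pos (a2 / d2 * x2)).
  set (em := exp (- (a2 / d2 * x2))) in *. set (ep := exp (a2 / d2 * x2)) in *.
  split.
  - intros eps Heps. exists (eps * q / ep).
    split; [apply Rdiv_lt_0_compat; nra |]. intros h w Hh Hw x Hx.
    destruct (pos_sol_bounds h q w ltac:(lra) Hq Hw x Hx) as [Hlow Hup]. fold em ep in Hlow, Hup.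
    assert (h * ep < eps * q / ep * ep) by (apply Rmult_lt_compat_r; lra).
    replace (eps * q / ep * ep) with (eps * q) in * by (field; lra).
    assert (0 < h * em) by (apply Rmult_lt_0_compat; lra).
    rewrite Rabs_right; [apply (Rmult_lt_reg_l q) |]; nra.
  - intro M. assert (HM := Rabs_pos M). exists ((Rabs M + 1) * q / em).
    split; [apply Rdiv_lt_0_compat; nra |]. intros h w Hh Hw x Hx.
    assert (H0 : 0 < (Rabs M + 1) * q / em) by (apply Rdiv_lt_0_compat; nra).
    destruct (pos_sol_bounds h q w ltac:(lra) Hq Hw x Hx) as [Hlow Hup]. fold em ep in Hlow, Hup.
    assert ((Rabs M + 1) * q / em * em < h * em) by (apply Rmult_lt_compat_r; lra).
    replace ((Rabs M + 1) * q / em * em) with ((Rabs M + 1) * q) in * by (field; lra).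
    assert (HMabs := RRle_abs M).
    apply (Rmult_lt_reg_l q); nra.
Qed.

Lemma pos_sol_limits_q (h : R) : 0 < h ->
  (forall M, exists delta, 0 < delta /\
     forall q w, 0 < q < delta -> is_pos_sol d2 a2 h q x2 w ->
       forall x, 0 <= x <= x2 -> M < w x) /\
  (forall eps, 0 < eps -> exists Q, 0 < Q /\
     forall q w, Q < q -> is_pos_sol d2 a2 h q x2 w ->
       forall x, 0 <= x <= x2 -> Rabs (w x) < eps).
Proof.
  intro Hh. assert (Em := exp_pos (- (a2 / d2 * x2))). assert (Ep := exp_pos (a2 / d2 * x2)).
  set (em := exp (- (a2 / d2 * x2))) in *. set (ep := exp (a2 / d2 * x2)) in *.
  split.
  - intro M. assert (HM := Rabs_pos M). exists (h * em / (Rabs M + 1)).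
    split; [apply Rdiv_lt_0_compat; nra |]. intros q w Hq Hw x Hx.
    destruct (pos_sol_bounds h q w Hh ltac:(lra) Hw x Hx) as [Hlow Hup]. fold em ep in Hlow, Hup.
    assert (q * (Rabs M + 1) < h * em / (Rabs M + 1) * (Rabs M + 1))
      by (apply Rmult_lt_compat_r; lra).
    replace (h * em / (Rabs M + 1) * (Rabs M + 1)) with (h * em) in * by (field; lra).
    assert (HMabs := RRle_abs M).
    apply (Rmult_lt_reg_l q); nra.
  - intros eps Heps. exists (h * ep / eps).
    split; [apply Rdiv_lt_0_compat; nra |]. intros q w Hq Hw x Hx.
    assert (H0 : 0 < h * ep / eps) by (apply Rdiv_lt_0_compat; nra).
    destruct (pos_sol_bounds h q w Hh ltac:(lra) Hw x Hx) as [Hlow Hup]. fold em ep in Hlow, Hup.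
    assert (h * ep / eps * eps < q * eps) by (apply Rmult_lt_compat_r; lra).
    replace (h * ep / eps * eps) with (h * ep) in * by (field; lra).
    assert (0 < h * em) by (apply Rmult_lt_0_compat; lra).
    rewrite Rabs_right; [apply (Rmult_lt_reg_l q) |]; nra.
Qed.

End SteadyStateProperties.

Theorem lemma3p3 (d2 a2 x2 L : R) :
  0 < d2 -> 0 < a2 -> 0 < x2 -> x2 <= L ->
  (* existence and uniqueness (on [0,x2]) of the positive solution *)
  (forall h q, 0 < h -> 0 < q ->
     (exists w, is_pos_sol d2 a2 h q x2 w) /\
     (forall w1 w2, is_pos_sol d2 a2 h q x2 w1 -> is_pos_sol d2 a2 h q x2 w2 ->
        forall x, 0 <= x <= x2 -> w1 x = w2 x)) /\
  (* (i) *)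
  (forall h q w, 0 < h -> 0 < q -> is_pos_sol d2 a2 h q x2 w ->
     forall x, 0 < x < x2 -> 0 < Derive w x < a2 / d2 * w x) /\
  (* (ii) strictly increasing in h *)
  (forall h1 h2 q w1 w2, 0 < h1 -> h1 < h2 -> 0 < q ->
     is_pos_sol d2 a2 h1 q x2 w1 -> is_pos_sol d2 a2 h2 q x2 w2 ->
     forall x, 0 < x < x2 -> w1 x < w2 x) /\
  (* (iii) limits in h, uniformly on [0,x2] *)
  (forall q, 0 < q ->
     (forall eps, 0 < eps -> exists delta, 0 < delta /\
        forall h w, 0 < h < delta -> is_pos_sol d2 a2 h q x2 w ->
          forall x, 0 <= x <= x2 -> Rabs (w x) < eps) /\
     (forall M, exists H, 0 < H /\
        forall h w, H < h -> is_pos_sol d2 a2 h q x2 w ->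
          forall x, 0 <= x <= x2 -> M < w x)) /\
  (* (iv) strictly decreasing in q *)
  (forall h q1 q2 w1 w2, 0 < h -> 0 < q1 -> q1 < q2 ->
     is_pos_sol d2 a2 h q1 x2 w1 -> is_pos_sol d2 a2 h q2 x2 w2 ->
     forall x, 0 < x < x2 -> w2 x < w1 x) /\
  (* (v) limits in q, uniformly on [0,x2] *)
  (forall h, 0 < h ->
     (forall M, exists delta, 0 < delta /\
        forall q w, 0 < q < delta -> is_pos_sol d2 a2 h q x2 w ->
          forall x, 0 <= x <= x2 -> M < w x) /\
     (forall eps, 0 < eps -> exists Q, 0 < Q /\
        forall q w, Q < q -> is_pos_sol d2 a2 h q x2 w ->
          forall x, 0 <= x <= x2 -> Rabs (w x) < eps)).
Proof.
  intros Hd Ha Hx _.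
  split; [| split; [| split; [| split; [| split]]]].
  - intros h q. now apply pos_sol_exists_unique.
  - intros h q w. now apply pos_sol_derive_bounds.
  - intros h1 h2 q w1 w2 Hh1 Hh12 Hq H1 H2 x Hx12.
    apply (pos_sol_lt d2 a2 x2 Hd Ha Hx h2 q h1 q w2 w1); auto; lra.
  - intro q. now apply pos_sol_limits_h.
  - intros h q1 q2 w1 w2 Hh Hq1 Hq12 H1 H2 x Hx12.
    apply (pos_sol_lt d2 a2 x2 Hd Ha Hx h q1 h q2 w1 w2); auto; lra.
  - intro h. now apply pos_sol_limits_q.
Qed.
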